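(* Let $R_{\mathrm{tr},\mathbb{F}}(\rho):=\min_{\sigma\in\mathbb{F}}\frac12\|\rho-\sigma\|_1$. If a state $\Phi$ satisfies $D_{\min,\mathbb{F}}(\Phi)=D_{s,\mathbb{F}}(\Phi)=:r$ or $D_{\min,\mathrm{aff}(\mathbb{F})}(\Phi)=D_{\max,\mathbb{F}}(\Phi)=:r$, then $R_{\mathrm{tr},\mathbb{F}}(\Phi)=1-2^{-r}$.
   Context: Finite-dimensional Hilbert space, $\log$ base 2. $\mathbb{F}$ is a convex and closed set of (free) states. $D_{\min,\mathbb{F}}(\rho)=\inf_{\sigma\in\mathbb{F}}(-\log\mathrm{Tr}[\Pi_\rho\sigma])$ ($\Pi_\rho$ support projector); $D_{\min,\mathrm{aff}(\mathbb{F})}(\rho)=\inf_{\sigma\in\mathrm{aff}(\mathbb{F})}\sup\{-\log\mathrm{Tr}[P\sigma]:0\le P\le\mathbb{1},\mathrm{Tr}[P\rho]=1\}$ with $\mathrm{aff}(\mathbb{F})$ the affine hull; $D_{\max,\mathbb{F}}(\rho)=\inf\{\log(1+s):\frac{\rho+s\tau}{1+s}\in\mathbb{F},\tau\text{ a state}\}$; $D_{s,\mathbb{F}}(\rho)=\inf\{\log(1+s):\frac{\rho+s\tau}{1+s}\in\mathbb{F},\tau\in\mathbb{F}\}$. *)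

From HB Require Import structures.
From mathcomp Require Import all_boot all_order all_algebra.
From mathcomp Require Import sesquilinear spectral.
From mathcomp Require Import complex.
From mathcomp Require Import all_classical all_reals all_analysis.

Set Implicit Arguments.
Unset Strict Implicit.
Unset Printing Implicit Defensive.

Import Order.TTheory GRing.Theory Num.Theory numFieldNormedType.Exports.
Local Open Scope ring_scope.
Local Open Scope classical_set_scope.

Section QuantumResourceDefs.
Variables (R : realType) (n : nat).
Local Notation C := R[i].
Local Notation M := 'M[C]_n.

Definition cr (t : R) : C := (t%:C)%C.

Definition adj (m p : nat) (A : 'M[C]_(m, p)) : 'M[C]_(p, m) := (map_mx Num.conj A)^T.

(* positive semidefinite: <v|A|v> is real and >= 0 for every vector v
   (order of the numClosedField R[i]: 0 <= z means z real nonnegative) *)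
Definition psd (A : M) : Prop := forall v : 'rV[C]_n, 0 <= (v *m A *m adj v) 0 0.

Definition state (rho : M) : Prop := psd rho /\ \tr rho = 1.

Definition convex_mset (F : set M) : Prop :=
  forall a b, F a -> F b -> forall t : R, 0 <= t <= 1 ->
    F (cr t *: a + cr (1 - t) *: b).

(* closedness in the usual (entrywise) topology of M_n(C) = R^(2 n^2) *)
Definition closed_mset (F : set M) : Prop :=
  forall (u : nat -> M) (A : M), (forall k, F (u k)) ->
    (forall i j, (fun k => complex.Re (u k i j)) @ \oo --> (complex.Re (A i j) : R)) ->
    (forall i j, (fun k => complex.Im (u k i j)) @ \oo --> (complex.Im (A i j) : R)) ->
    F A.

Definition free_states (F : set M) : Prop :=
  F `<=` state /\ convex_mset F /\ closed_mset F.

Definition aff (F : set M) : set M :=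
  [set sigma | exists (k : nat) (s : 'I_k -> M) (l : 'I_k -> R),
     (forall i, F (s i)) /\ \sum_(i < k) l i = 1 /\
     sigma = \sum_(i < k) cr (l i) *: s i].

(* support projector: projector onto the span of the eigenvectors with
   nonzero eigenvalue, built from the spectral decomposition
   rho = invmx P *m diag_mx d *m P *)
Definition suppProj (rho : M) : M :=
  invmx (spectralmx rho)
    *m diag_mx (\row_i (if spectral_diag rho 0 i == 0 then 0 else 1))
    *m spectralmx rho.

Definition mlog (t : R) : \bar R :=
  if 0 < t then (- (ln t / ln 2))%:E else +oo%E.

Definition log2 (t : R) : R := ln t / ln 2.

Definition Dmin (F : set M) (rho : M) : \bar R :=
  ereal_inf [set mlog (complex.Re (\tr (suppProj rho *m sigma))) | sigma in F].

Definition test_ops (rho : M) : set M :=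
  [set P | psd P /\ psd (1%:M - P) /\ \tr (P *m rho) = 1].

Definition Dmin_aff (F : set M) (rho : M) : \bar R :=
  ereal_inf [set ereal_sup [set mlog (complex.Re (\tr (P *m sigma))) | P in test_ops rho]
            | sigma in aff F].

Definition Dmax (F : set M) (rho : M) : \bar R :=
  ereal_inf [set (log2 (1 + s))%:E | s in
    [set s : R | 0 <= s /\ exists tau, state tau /\
        F ((cr (1 + s))^-1 *: (rho + cr s *: tau))]].

Definition Ds (F : set M) (rho : M) : \bar R :=
  ereal_inf [set (log2 (1 + s))%:E | s in
    [set s : R | 0 <= s /\ exists tau, F tau /\
        F ((cr (1 + s))^-1 *: (rho + cr s *: tau))]].

(* trace norm ||X||_1 = Tr sqrt(X^dagger X) = sum of the square roots of the
   eigenvalues of X^dagger X *)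
Definition trnorm (X : M) : R :=
  complex.Re (\sum_(i < n) 2.-root (spectral_diag (adj X *m X) 0 i)).

Definition Rtr (F : set M) (rho : M) : \bar R :=
  ereal_inf [set (trnorm (rho - sigma) / 2)%:E | sigma in F].

End QuantumResourceDefs.

From HB Require Import structures.
From mathcomp Require Import all_boot all_order all_algebra.
From mathcomp Require Import sesquilinear spectral.
From mathcomp Require Import complex.
From mathcomp Require Import all_classical all_reals all_analysis.
From mathcomp Require Import ring lra.

(* Let sigma be free and let P be a test for Phi (0 <= P <= 1, Tr[P Phi] = 1).
   Diagonalizing Phi - sigma = U^* D U, the diagonal entries of U P U^* lie in
   [0, 1] and those of D sum to 0, so 1 - Tr[P sigma] = Tr[P (Phi - sigma)] is
   at most (1/2) ||Phi - sigma||_1.  The support projector of Phi is such a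
   test, and so is every test occurring in D_min,aff (as F is contained in
   aff(F)); either hypothesis D = r therefore yields Tr[P sigma] <= 2^-r for a
   test P, i.e. R_tr >= 1 - 2^-r.
   Conversely, if sigma = (Phi + s tau)/(1 + s) is free for a state tau, then
   Phi - sigma = s/(1 + s) (Phi - tau) has trace norm at most 2 s/(1 + s), so
   R_tr <= 1 - 1/(1 + s) = 1 - 2^-log(1 + s); taking the infimum over s gives
   R_tr <= 1 - 2^-D_max, and D_max <= D_s since free states are states. *)

Set Implicit Arguments.
Unset Strict Implicit.
Unset Printing Implicit Defensive.

Import Order.TTheory GRing.Theory Num.Theory numFieldNormedType.Exports.
Local Open Scope ring_scope.
Local Open Scope classical_set_scope.

Lemma char_poly_similar (F : fieldType) n (P A : 'M[F]_n) : P \in unitmx ->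
  char_poly (invmx P *m A *m P) = char_poly A.
Proof.
move=> P_unit; rewrite /char_poly /char_poly_mx.
set mp := map_mx (@polyC F).
have -> : 'X%:M - mp (invmx P *m A *m P) = mp (invmx P) *m ('X%:M - mp A) *m mp P.
  rewrite mulmxBr mulmxBl mul_mx_scalar -scalemxAl -map_mxM mulVmx // map_mx1.
  by rewrite /mp !map_mxM scalemx1.
by rewrite !det_mulmx !det_map_mx mulrAC -rmorphM -det_mulmx mulVmx // det1 rmorph1 mul1r.
Qed.

Lemma eq_char_poly_diag_sum (F : fieldType) (V : nmodType) n (r s : 'rV[F]_n)
    (g : F -> V) :
  char_poly (diag_mx r) = char_poly (diag_mx s) -> \sum_i g (r 0 i) = \sum_i g (s 0 i).
Proof.
have cpE (t : 'rV[F]_n) : char_poly (diag_mx t) = \prod_(i < n) ('X - (t 0 i)%:P).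
  by rewrite char_poly_trig ?diag_mx_is_trig //; apply: eq_bigr => i _; rewrite mxE eqxx.
rewrite !cpE => eq_cp.
rewrite -(big_map (fun i => r 0 i) xpredT g) -(big_map (fun i => s 0 i) xpredT g).
by apply/perm_big/prod_XsubC_eq; rewrite !big_map.
Qed.

Lemma subr_mixture (K : fieldType) (V : lmodType K) (c : K) (a t : V) : 1 + c != 0 ->
  a - (1 + c)^-1 *: (a + c *: t) = (c / (1 + c)) *: (a - t).
Proof.
move=> c1_neq0; have e : 1 - (1 + c)^-1 = c / (1 + c) by field.
rewrite scalerDr scalerBr scalerA [_^-1 * c]mulrC opprD addrA.
by rewrite -{1}[a]scale1r -scalerBl e.
Qed.

Section WeightedSums.
Context {R : realFieldType} {I : finType}.
Implicit Types (a b d q : I -> R).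

Lemma sum_normB_le a b : (forall i, 0 <= a i) -> (forall i, 0 <= b i) ->
  \sum_i `|a i - b i| <= \sum_i a i + \sum_i b i.
Proof.
move=> a_ge0 b_ge0; rewrite -big_split /=; apply: ler_sum => i _.
have := a_ge0 i; have := b_ge0 i; rewrite ler_norml => ? ?; apply/andP; split; lra.
Qed.

Lemma sum_weighted_le_half_norm q d : \sum_i d i = 0 -> (forall i, 0 <= q i <= 1) ->
  \sum_i q i * d i <= (\sum_i `|d i|) / 2.
Proof.
move=> d_sum0 q01; apply: (@le_trans _ _ (\sum_i (`|d i| + d i) / 2)).
  apply: ler_sum => i _; have /andP[q_ge0 q_le1] := q01 i.
  by case: (lerP 0 (d i)) => [d_ge0|d_lt0]; [rewrite ger0_norm | rewrite ltr0_norm]; nra.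
by rewrite -mulr_suml big_split /= d_sum0 addr0.
Qed.
End WeightedSums.

Section Log2.
Context {R : realType}.

Lemma ln2_gt0 : 0 < ln (2 : R).
Proof. by rewrite ln_gt0 // ltr1n. Qed.

Lemma powR2_gt0 (x : R) : 0 < 2 `^ x.
Proof. by rewrite powR_gt0. Qed.

Lemma le_powR2 (x u : R) : 0 < u -> (u <= 2 `^ x) = (log2 u <= x).
Proof.
move=> u_gt0; rewrite -(@ler_ln _ u) ?posrE ?powR2_gt0 // ln_powR.
by rewrite /log2 ler_pdivrMr ?ln2_gt0.
Qed.

Lemma ge_powR2 (x u : R) : 0 < u -> (2 `^ x <= u) = (x <= log2 u).
Proof.
move=> u_gt0; rewrite -(@ler_ln _ _ u) ?posrE ?powR2_gt0 // ln_powR.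
by rewrite /log2 ler_pdivlMr ?ln2_gt0.
Qed.

Lemma powR2_Nlog2 (x : R) : 0 < x -> 2 `^ (- log2 x) = x^-1.
Proof.
move=> x_gt0; rewrite /powR pnatr_eq0 /log2 mulNr -mulrA mulVf ?gt_eqF ?ln2_gt0 //.
by rewrite mulr1 expRN lnK.
Qed.

Local Open Scope ereal_scope.

Lemma le_mlog (u t : R) : (u <= t)%R -> mlog t <= mlog u.
Proof.
move=> le_ut; rewrite /mlog; have [u_gt0|] := ltP 0%R u; last by rewrite leey.
rewrite (lt_le_trans u_gt0 le_ut) lee_fin lerN2.
by rewrite ler_pM2r ?invr_gt0 ?ln2_gt0 // ler_ln ?posrE // (lt_le_trans u_gt0).
Qed.

Lemma le_mlog_powR2 (r t : R) : r%:E <= mlog t -> (t <= 2 `^ (- r))%R.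
Proof.
rewrite /mlog; case: ltP => [t_gt0|t_le0 _]; last exact: le_trans t_le0 (ltW (powR2_gt0 _)).
by rewrite lee_fin le_powR2 // lerNr.
Qed.

Lemma ereal_inf_le_powR2 (I : Type) (S : set I) (g : I -> R) (X : \bar R) (r : R) :
  ereal_inf [set (g s)%:E | s in S] <= r%:E ->
  (forall s, S s -> X <= (1 - 2 `^ (- g s))%:E) -> X <= (1 - 2 `^ (- r))%:E.
Proof.
move=> inf_le_r X_le.
have [s0 Ss0] : exists s, S s.
  apply: contrapT => S0; move: inf_le_r.
  suff -> : [set (g s)%:E | s in S] = set0 by rewrite ereal_inf0.
  by apply/seteqP; split=> // y [s Ss _]; apply: S0; exists s.
case: X X_le => [x||] X_le; [|by have := X_le s0 Ss0|by rewrite leNye].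
have x_lt1 : (x < 1)%R.
  by have := X_le s0 Ss0; rewrite lee_fin; have := powR2_gt0 (- g s0); lra.
have log_le_g s : S s -> (- log2 (1 - x) <= g s)%R.
  move=> /X_le; rewrite lee_fin lerNl -ge_powR2; lra.
have : (- log2 (1 - x))%:E <= r%:E.
  apply: le_trans inf_le_r; apply/ereal_infP => _ [s Ss <-].
  by rewrite lee_fin log_le_g.
rewrite !lee_fin lerNl -ge_powR2; lra.
Qed.
End Log2.

Section ComplexScalars.
Context {R : realType}.
Local Notation C := R[i].

Lemma conj_cr (t : R) : (cr t)^* = cr t.
Proof. exact: conjc_real. Qed.

Lemma Re_ge0 (z : C) : 0 <= z -> 0 <= complex.Re z.
Proof. by rewrite lecE => /andP[]. Qed.

Lemma Re_mul_cr (z : C) (x : R) : complex.Re (z * cr x) = complex.Re z * x.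
Proof. by case: z => a b /=; rewrite mulr0 subr0. Qed.
End ComplexScalars.

Section Adjoint.
Context {R : realType}.
Local Notation C := R[i].
Local Open Scope sesquilinear_scope.

Lemma adjE m p (A : 'M[C]_(m, p)) : adj A = A ^t*.
Proof. by rewrite /adj map_trmx. Qed.

Lemma adjM m p q (A : 'M[C]_(m, p)) (B : 'M[C]_(p, q)) :
  adj (A *m B) = adj B *m adj A.
Proof. by rewrite /adj map_mxM trmx_mul. Qed.

Lemma adjK m p (A : 'M[C]_(m, p)) : adj (adj A) = A.
Proof. by apply/matrixP=> i j; rewrite !mxE conjCK. Qed.

Lemma adjD m p (A B : 'M[C]_(m, p)) : adj (A + B) = adj A + adj B.
Proof. by apply/matrixP=> i j; rewrite !mxE rmorphD. Qed.

Lemma adjB m p (A B : 'M[C]_(m, p)) : adj (A - B) = adj A - adj B.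
Proof. by apply/matrixP=> i j; rewrite !mxE rmorphB. Qed.

Lemma adjZ m p (c : C) (A : 'M[C]_(m, p)) : adj (c *: A) = c^* *: adj A.
Proof. by apply/matrixP=> i j; rewrite !mxE rmorphM. Qed.

Lemma adj_delta m p (i : 'I_m) (j : 'I_p) : adj (delta_mx i j) = delta_mx j i :> 'M[C]_(p, m).
Proof. by apply/matrixP=> k l; rewrite !mxE andbC; case: andP; rewrite ?conjC1 ?conjC0. Qed.

Context {n : nat}.
Implicit Types (A : 'M[C]_n) (v : 'rV[C]_n).

Lemma form_delta A i j :
  ((delta_mx 0 i : 'rV[C]_n) *m A *m adj (delta_mx 0 j : 'rV[C]_n)) 0 0 = A i j.
Proof. by rewrite adj_delta -rowE -colE !mxE. Qed.

Lemma form_adj A v : (v *m adj A *m adj v) 0 0 = ((v *m A *m adj v) 0 0)^*.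
Proof.
have -> : v *m adj A *m adj v = adj (v *m A *m adj v) by rewrite !adjM adjK mulmxA.
by rewrite !mxE.
Qed.

Lemma form_eq0 A : (forall v, (v *m A *m adj v) 0 0 = 0) -> A = 0.
Proof.
move=> A0; apply/matrixP=> i j; rewrite mxE.
pose e k : 'rV[C]_n := delta_mx 0 k.
have Akk k : A k k = 0 by rewrite -form_delta A0.
have form_pair c : c * A j i + c^* * A i j = 0.
  have := A0 (e i + c *: e j).
  rewrite adjD adjZ mulmxDl mulmxDr !mulmxDl -!scalemxAl -!scalemxAr.
  rewrite ![((_ + _ : 'M[C]_1) 0 0)]mxE ![((_ *: _ : 'M[C]_1) 0 0)]mxE !form_delta !Akk.
  by rewrite !mulr0 add0r addr0.
have sym : A j i + A i j = 0 by have := form_pair 1; rewrite conjC1 !mul1r.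
have asym : A j i - A i j = 0.
  have /eqP := form_pair 'i; rewrite conjCi mulNr -mulrBr mulf_eq0.
  by rewrite (negPf (neq0Ci _)) => /eqP.
have : 2 * A i j = 0.
  by transitivity ((A j i + A i j) - (A j i - A i j)); [ring | rewrite sym asym subr0].
by move/eqP; rewrite mulf_eq0 pnatr_eq0 => /eqP.
Qed.

Lemma psd_adj A : psd A -> adj A = A.
Proof.
move=> A_psd; apply/eqP; rewrite -subr_eq0; apply/eqP/form_eq0 => v.
rewrite mulmxBr mulmxBl [((_ - _ : 'M[C]_1) 0 0)]mxE [((- _ : 'M[C]_1) 0 0)]mxE.
by rewrite form_adj conj_Creal ?subrr // ger0_real.
Qed.
End Adjoint.

Section UnitaryDiagonalization.
Context {R : realType} {n : nat}.
Local Notation C := R[i].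
Local Notation M := 'M[C]_n.
Local Open Scope sesquilinear_scope.
Implicit Types (A U : M) (d : 'I_n -> R).

Definition rdiag d : M := diag_mx (\row_i cr (d i)).

Lemma adj_hermsymmx A : adj A = A -> A \is hermsymmx.
Proof. by move=> A_herm; apply/is_hermitianmxP; rewrite expr0 scale1r -adjE A_herm. Qed.

Lemma unitary_mulmx_adj U : U \is unitarymx -> U *m adj U = 1%:M.
Proof. by move=> /unitarymxP; rewrite adjE. Qed.

Lemma unitary_adj_mulmx U : U \is unitarymx -> adj U *m U = 1%:M.
Proof. by move=> /unitary_mulmx_adj /mulmx1C. Qed.

Lemma hermitian_rdiag A : adj A = A ->
  exists U d, U \is unitarymx /\ A = adj U *m rdiag d *m U.
Proof.
move=> /adj_hermsymmx A_hsym.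
have /orthomx_spectralP A_eq := hermitian_normalmx A_hsym.
have U_unitary := spectral_unitarymx A.
exists (spectralmx A), (fun i => complex.Re (spectral_diag A 0 i)).
split; first exact: U_unitary.
rewrite {1}A_eq (invmx_unitary U_unitary) -adjE /rdiag.
congr (_ *m diag_mx _ *m _); apply/matrixP => i j; rewrite !mxE ord1 /cr RRe_real //.
by move/mxOverP: (hermitian_spectral_diag_real A_hsym); apply.
Qed.

Lemma adj_rdiag d : adj (rdiag d) = rdiag d.
Proof.
apply/matrixP => i j; rewrite !mxE; case: eqVneq => [->|_].
  by rewrite !mulr1n conj_cr.
by rewrite !mulr0n conjC0.
Qed.

Lemma rdiagM d e : rdiag d *m rdiag e = rdiag (fun i => d i * e i).
Proof.
rewrite /rdiag mulmx_diag; congr diag_mx; apply/matrixP => i j.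
by rewrite !mxE /cr -rmorphM.
Qed.

Lemma scale_rdiag c d : cr c *: rdiag d = rdiag (fun i => c * d i).
Proof.
apply/matrixP => i j; rewrite !mxE.
by case: eqP; rewrite ?mulr1n ?mulr0n ?mulr0 // /cr rmorphM.
Qed.

(* X^* X is unitarily similar both to its spectral diagonal and to diag(d^2):
   equal characteristic polynomials make the two spectra permutations of
   each other. *)
Lemma trnorm_rdiag U d : U \is unitarymx ->
  trnorm (adj U *m rdiag d *m U) = \sum_i `|d i|.
Proof.
move=> U_unitary; set X := adj U *m rdiag d *m U.
have XX : adj X *m X = invmx U *m rdiag (fun i => d i ^+ 2) *m U.
  rewrite (invmx_unitary U_unitary) -adjE !adjM adjK adj_rdiag !mulmxA.
  rewrite -[adj U *m _ *m _ *m adj U]mulmxA (unitary_mulmx_adj U_unitary) mulmx1.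
  by rewrite -[adj U *m _ *m rdiag d]mulmxA rdiagM.
have /hermitian_normalmx/orthomx_spectralP XX_eq : adj X *m X \is hermsymmx.
  by apply: adj_hermsymmx; rewrite adjM adjK.
have cp : char_poly (diag_mx (spectral_diag (adj X *m X))) =
          char_poly (diag_mx (\row_i cr (d i ^+ 2))).
  transitivity (char_poly (adj X *m X)).
    by rewrite [in RHS]XX_eq char_poly_similar ?spectral_unit.
  by rewrite XX char_poly_similar ?(unitarymx_unit U_unitary).
rewrite /trnorm (eq_char_poly_diag_sum (fun z => 2.-root z) cp) raddf_sum.
apply: eq_bigr => i _; rewrite mxE /cr -real_normK ?num_real // rmorphXn sqrCK //.
by rewrite ler0c normr_ge0.
Qed.

Lemma trnorm_hermZ A c : adj A = A -> 0 <= c -> trnorm (cr c *: A) = c * trnorm A.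
Proof.
move=> /hermitian_rdiag [U [d [U_unitary ->]]] c_ge0.
rewrite scalemxAl scalemxAr scale_rdiag !trnorm_rdiag // mulr_sumr.
by apply: eq_bigr => i _; rewrite normrM ger0_norm.
Qed.

Lemma mxtrace_unitary_conj U A : U \is unitarymx -> \tr (U *m A *m adj U) = \tr A.
Proof.
by move=> U_unitary; rewrite mxtrace_mulC mulmxA (unitary_adj_mulmx U_unitary) mul1mx.
Qed.

Lemma mxtrace_adj_unitary_conj U A : U \is unitarymx -> \tr (adj U *m A *m U) = \tr A.
Proof.
by move=> U_unitary; rewrite mxtrace_mulC mulmxA (unitary_mulmx_adj U_unitary) mul1mx.
Qed.

Lemma unitary_conjK U A : U \is unitarymx -> U *m (adj U *m A *m U) *m adj U = A.
Proof.
move=> U_unitary; rewrite !mulmxA (unitary_mulmx_adj U_unitary) mul1mx.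
by rewrite -mulmxA (unitary_mulmx_adj U_unitary) mulmx1.
Qed.

Lemma psd_conj_diag_ge0 U A i : psd A -> 0 <= (U *m A *m adj U) i i.
Proof.
move=> A_psd; rewrite -form_delta.
by have := A_psd (delta_mx 0 i *m U); rewrite adjM !mulmxA.
Qed.

Lemma psd_adj_conj_diag U (e : 'rV[C]_n) : (forall i, 0 <= e 0 i) ->
  psd (adj U *m diag_mx e *m U).
Proof.
move=> e_ge0 v.
have -> : v *m (adj U *m diag_mx e *m U) *m adj v
    = (v *m adj U) *m diag_mx e *m adj (v *m adj U) by rewrite adjM adjK !mulmxA.
rewrite mul_mx_diag mxE; apply: sumr_ge0 => j _; rewrite !mxE.
by rewrite mulrAC; apply: mulr_ge0; [exact: mul_conjC_ge0 | exact: e_ge0].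
Qed.
End UnitaryDiagonalization.

Section StateDifference.
Context {R : realType} {n : nat}.
Local Notation C := R[i].
Local Notation M := 'M[C]_n.
Variables (rho sigma U : M) (d : 'I_n -> R).
Hypotheses (rho_state : state rho) (sigma_state : state sigma)
  (U_unitary : U \is unitarymx) (rho_sigma_rdiag : rho - sigma = adj U *m rdiag d *m U).

Let diagRe (A : M) i := complex.Re ((U *m A *m adj U) i i).

Let diagRe_ge0 A i : psd A -> 0 <= diagRe A i.
Proof. by move=> A_psd; apply/Re_ge0/psd_conj_diag_ge0. Qed.

Let sum_diagRe_state A : state A -> \sum_i diagRe A i = 1.
Proof.
case=> _ trA; rewrite -raddf_sum -/(\tr (U *m A *m adj U)).
by rewrite mxtrace_unitary_conj // trA.
Qed.

Let rdiag_diagRe i : d i = diagRe rho i - diagRe sigma i.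
Proof.
have := congr1 (fun X : M => complex.Re ((U *m X *m adj U) i i)) rho_sigma_rdiag.
rewrite /= unitary_conjK // /rdiag [in RHS]mxE [in RHS]mxE eqxx mulr1n /= => <-.
by rewrite mulmxBr mulmxBl [((_ - _ : M) i i)]mxE [((- _ : M) i i)]mxE raddfB.
Qed.

Lemma sum_rdiag_state_diff : \sum_i d i = 0.
Proof.
under eq_bigr do rewrite rdiag_diagRe.
by rewrite sumrB !sum_diagRe_state // subrr.
Qed.

Lemma sum_norm_rdiag_state_diff_le2 : \sum_i `|d i| <= 2.
Proof.
under eq_bigr do rewrite rdiag_diagRe.
have rho_ge0 i : 0 <= diagRe rho i by apply: diagRe_ge0; case: rho_state.
have sigma_ge0 i : 0 <= diagRe sigma i by apply: diagRe_ge0; case: sigma_state.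
by apply: le_trans (sum_normB_le rho_ge0 sigma_ge0) _; rewrite !sum_diagRe_state.
Qed.

Lemma test_rdiag_state_diff P : psd P -> psd (1%:M - P) ->
  complex.Re (\tr (P *m (rho - sigma))) <= (\sum_i `|d i|) / 2.
Proof.
move=> P_psd P1_psd.
have trE : \tr (P *m (rho - sigma)) = \sum_i (U *m P *m adj U) i i * cr (d i).
  rewrite rho_sigma_rdiag !mulmxA mxtrace_mulC !mulmxA /rdiag mul_mx_diag.
  by apply: eq_bigr => i _; rewrite !mxE.
have -> : complex.Re (\tr (P *m (rho - sigma))) = \sum_i diagRe P i * d i.
  by rewrite trE raddf_sum; apply: eq_bigr => i _; exact: Re_mul_cr.
apply: sum_weighted_le_half_norm; first exact: sum_rdiag_state_diff.
move=> i; rewrite diagRe_ge0 //=.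
have := diagRe_ge0 i P1_psd; rewrite /diagRe mulmxBr mulmxBl mulmx1.
rewrite (unitary_mulmx_adj U_unitary) [((_ - _ : M) i i)]mxE [((- _ : M) i i)]mxE raddfB.
by rewrite mxE eqxx /= subr_ge0.
Qed.
End StateDifference.

Section States.
Context {R : realType} {n : nat}.
Local Notation C := R[i].
Local Notation M := 'M[C]_n.
Local Open Scope sesquilinear_scope.
Implicit Types (rho sigma P : M).

Lemma state_diff_rdiag rho sigma : state rho -> state sigma ->
  exists (U : M) d, U \is unitarymx /\ rho - sigma = adj U *m rdiag d *m U.
Proof. by move=> [rho_psd _] [sigma_psd _]; apply: hermitian_rdiag; rewrite adjB !psd_adj. Qed.

Lemma trnorm_state_diff_le2 rho sigma : state rho -> state sigma ->
  trnorm (rho - sigma) <= 2.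
Proof.
move=> rho_state sigma_state.
have [U [d [U_unitary rs_eq]]] := state_diff_rdiag rho_state sigma_state.
rewrite rs_eq trnorm_rdiag //.
exact: sum_norm_rdiag_state_diff_le2 rho_state sigma_state U_unitary rs_eq.
Qed.

Lemma Re_trace_test_le_trnorm rho sigma P : state rho -> state sigma ->
  psd P -> psd (1%:M - P) ->
  complex.Re (\tr (P *m (rho - sigma))) <= trnorm (rho - sigma) / 2.
Proof.
move=> rho_state sigma_state P_psd P1_psd.
have [U [d [U_unitary rs_eq]]] := state_diff_rdiag rho_state sigma_state.
rewrite [in trnorm _]rs_eq (trnorm_rdiag _ U_unitary).
exact: test_rdiag_state_diff rho_state sigma_state U_unitary rs_eq P P_psd P1_psd.
Qed.

Lemma test_ops_trnorm_lb rho sigma P : state rho -> state sigma -> test_ops rho P ->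
  1 - complex.Re (\tr (P *m sigma)) <= trnorm (rho - sigma) / 2.
Proof.
move=> rho_state sigma_state [P_psd [P1_psd trP]].
have := Re_trace_test_le_trnorm rho_state sigma_state P_psd P1_psd.
by rewrite mulmxBr linearB /= trP [X in X <= _ -> _]raddfB.
Qed.

Lemma suppProj_test rho : state rho -> test_ops rho (suppProj rho).
Proof.
move=> [rho_psd tr_rho].
have /hermitian_normalmx/orthomx_spectralP rho_eq := adj_hermsymmx (psd_adj rho_psd).
have V_unitary := spectral_unitarymx rho.
rewrite (invmx_unitary V_unitary) -adjE in rho_eq.
rewrite /suppProj (invmx_unitary V_unitary) -adjE.
set V := spectralmx rho in rho_eq V_unitary *; set sp := spectral_diag rho in rho_eq *.
pose ind b : 'rV[C]_n := \row_i (if (sp 0 i == 0) == b then 1 else 0).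
have ind_ge0 b i : 0 <= ind b 0 i by rewrite mxE; case: ifP => _; rewrite ?ler01 ?lexx.
have ind_false : \row_i (if sp 0 i == 0 then 0 else 1) = ind false.
  by apply/matrixP => i j; rewrite !mxE; case: (sp 0 j == 0).
rewrite ind_false; split; first exact: psd_adj_conj_diag.
split.
- have -> : 1%:M - adj V *m diag_mx (ind false) *m V = adj V *m diag_mx (ind true) *m V.
    have -> : diag_mx (ind true) = 1%:M - diag_mx (ind false).
      apply/matrixP => i j; rewrite !mxE.
      by case: (i == j); case: (sp 0 i == 0); rewrite /= ?mulr1n ?mulr0n ?subrr ?subr0.
    by rewrite mulmxBr mulmxBl mulmx1 (unitary_adj_mulmx V_unitary).
  exact: psd_adj_conj_diag.
- rewrite -tr_rho {2}rho_eq mxtrace_adj_unitary_conj // mxtrace_diag.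
  rewrite {1}rho_eq !mulmxA -[adj V *m _ *m V *m adj V]mulmxA (unitary_mulmx_adj V_unitary).
  rewrite mulmx1 -[adj V *m _ *m diag_mx sp]mulmxA mulmx_diag mxtrace_adj_unitary_conj //.
  rewrite mxtrace_diag; apply: eq_bigr => i _; rewrite !mxE.
  by case: (@eqP _ (sp _ i) 0) => [->|_]; rewrite ?mul0r ?mul1r.
Qed.

Lemma sub_aff (F : set M) : F `<=` aff F.
Proof.
move=> sigma Fsigma; exists 1%N, (fun _ => sigma), (fun _ => 1).
by rewrite !big_ord1 /cr scale1r.
Qed.
End States.

Section Robustness.
Context {R : realType} {n : nat}.
Local Notation C := R[i].
Local Notation M := 'M[C]_n.
Variables (F : set M) (Phi : M).
Hypotheses (F_state : F `<=` @state R n) (Phi_state : state Phi).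
Local Open Scope ereal_scope.

Lemma Rtr_ge_mlog (r : R) :
  (forall sigma, F sigma -> r%:E <= mlog (1 - trnorm (Phi - sigma) / 2)) ->
  (1 - 2 `^ (- r))%:E <= Rtr F Phi.
Proof.
move=> r_le; apply/ereal_infP => _ [sigma Fsigma <-]; rewrite lee_fin.
by have := le_mlog_powR2 (r_le _ Fsigma); lra.
Qed.

Lemma mlog_test_le_trnorm sigma P : F sigma -> test_ops Phi P ->
  mlog (complex.Re (\tr (P *m sigma))) <= mlog (1 - trnorm (Phi - sigma) / 2).
Proof.
move=> Fsigma P_test; apply: le_mlog.
by have := test_ops_trnorm_lb Phi_state (F_state Fsigma) P_test; lra.
Qed.

Lemma Dmin_le_mlog (r : R) sigma : r%:E <= Dmin F Phi -> F sigma ->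
  r%:E <= mlog (1 - trnorm (Phi - sigma) / 2).
Proof.
move=> r_le Fsigma; apply: (le_trans r_le).
apply: le_trans (mlog_test_le_trnorm Fsigma (suppProj_test Phi_state)).
by apply: ereal_inf_lbound; exists sigma.
Qed.

Lemma Dmin_aff_le_mlog (r : R) sigma : r%:E <= Dmin_aff F Phi -> F sigma ->
  r%:E <= mlog (1 - trnorm (Phi - sigma) / 2).
Proof.
move=> r_le Fsigma; apply: (le_trans r_le); apply: le_trans (ereal_inf_lbound _) _.
  by exists sigma; first exact: sub_aff.
by apply/ereal_supP => _ [P P_test <-]; exact: mlog_test_le_trnorm.
Qed.

Lemma Rtr_le_mixture (s : R) tau : (0 <= s)%R -> state tau ->
  F ((cr (1 + s))^-1 *: (Phi + cr s *: tau)) -> Rtr F Phi <= (s / (1 + s))%:E.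
Proof.
move=> s_ge0 tau_state Fmix.
apply: le_trans (ereal_inf_lbound _) _; first by exists ((cr (1 + s))^-1 *: (Phi + cr s *: tau)).
have cr1s : cr (1 + s) = (1 + cr s)%R by rewrite /cr rmorphD rmorph1.
have cr1s_neq0 : (1 + cr s != 0)%R by rewrite -cr1s /cr fmorph_eq0 gt_eqF //; lra.
have Phi_tau_herm : adj (Phi - tau) = (Phi - tau)%R.
  by rewrite adjB (psd_adj Phi_state.1) (psd_adj tau_state.1).
have q_ge0 : (0 <= s / (1 + s))%R by rewrite divr_ge0 //; lra.
rewrite cr1s subr_mixture // -cr1s /cr -fmorph_div trnorm_hermZ //.
by have := trnorm_state_diff_le2 Phi_state tau_state; rewrite lee_fin; nra.
Qed.

Lemma Rtr_le_Dmax (r : R) : Dmax F Phi <= r%:E -> Rtr F Phi <= (1 - 2 `^ (- r))%:E.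
Proof.
move=> /ereal_inf_le_powR2; apply=> s [s_ge0 [tau [tau_state Fmix]]].
rewrite powR2_Nlog2; last by lra.
have -> : (1 - (1 + s)^-1 = s / (1 + s))%R by field; lra.
exact: Rtr_le_mixture tau_state Fmix.
Qed.

Lemma Dmax_le_Ds : Dmax F Phi <= Ds F Phi.
Proof.
apply: ereal_inf_le_tmp => _ [s [s_ge0 [tau [Ftau Fmix]]] <-].
by exists s => //; split=> //; exists tau; split=> //; exact: F_state.
Qed.
End Robustness.

Theorem proposition13 (R : realType) (n : nat) (F : set 'M[R[i]]_n)
  (Phi : 'M[R[i]]_n) (r : R) :
  free_states F -> state Phi ->
  ((Dmin F Phi = r%:E /\ Ds F Phi = r%:E) \/
   (Dmin_aff F Phi = r%:E /\ Dmax F Phi = r%:E)) ->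
  Rtr F Phi = (1 - 2 `^ (- r))%:E.
Proof.
move=> [F_state _] Phi_state D_eq.
have Dmax_le_r : (Dmax F Phi <= r%:E)%E.
  by case: D_eq => [[_ <-]|[_ ->]] //; exact: Dmax_le_Ds.
have r_le_mlog sigma : F sigma -> (r%:E <= mlog (1 - trnorm (Phi - sigma) / 2))%E.
  move=> Fsigma; case: D_eq => [[Dmin_r _]|[Dmin_aff_r _]].
    by apply: (Dmin_le_mlog F_state Phi_state _ Fsigma); rewrite Dmin_r.
  by apply: (Dmin_aff_le_mlog F_state Phi_state _ Fsigma); rewrite Dmin_aff_r.
by apply/le_anti/andP; split; [exact: Rtr_le_Dmax Dmax_le_r | exact: Rtr_ge_mlog].
Qed.
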